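(* Let $k\ge1$, $A,B_1,\dots,B_k,C\in\mathbb{C}^{r\times r}$ with $C+mI$ invertible for all $m\ge0$. Fix $i$ and $n\ge1$ and suppose $B_i+mI$ is invertible for all $m\ge0$. Then $$F_{\mathcal D}[B_i+nI]=F_{\mathcal D}+x_iA\Big[\sum_{n_1=1}^nF_{\mathcal D}[A+I,\,B_i+n_1I,\,C+I]\Big]C^{-1}.$$ Furthermore, if $B_i-n_1I$ is invertible for $0\le n_1\le n$, then $$F_{\mathcal D}[B_i-nI]=F_{\mathcal D}-x_iA\Big[\sum_{n_1=0}^{n-1}F_{\mathcal D}[A+I,\,B_i-n_1I,\,C+I]\Big]C^{-1}.$$
   Context: For $M\in\mathbb{C}^{r\times r}$: $(M)_0=I$, $(M)_m=M(M+I)\cdots(M+(m-1)I)$, $(M)^{-1}_m=((M)_m)^{-1}$. $$F_{\mathcal D}=F_{\mathcal D}[A,B_1,\dots,B_k;C;x_1,\dots,x_k]=\sum_{m_1,\dots,m_k\ge0}(A)_{m_1+\cdots+m_k}\prod_{j=1}^k(B_j)_{m_j}\,(C)^{-1}_{m_1+\cdots+m_k}\prod_{j=1}^k\frac{x_j^{m_j}}{m_j!},$$ $x_j$ scalar variables, matrix products in order of increasing index; identities are of formal power series in the $x_j$. $F_{\mathcal D}[\dots]$ lists only the shifted parameters, all others unchanged. *)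

From HB Require Import structures.
From mathcomp Require Import all_boot all_order all_algebra.
Set Implicit Arguments. Unset Strict Implicit. Unset Printing Implicit Defensive.
Import Order.TTheory GRing.Theory Num.Theory.
Local Open Scope ring_scope.

Section FD.
Variables (K : numClosedFieldType) (r k : nat).

Definition poch (M : 'M[K]_r) (m : nat) : 'M[K]_r :=
  \prod_(j < m) (M + (j%:R)%:M).

(* Formal power series in x_1..x_k with matrix coefficients,
   represented by their coefficient function on multi-indices. *)
Definition mseries := ('I_k -> nat) -> 'M[K]_r.

Definition msum (m : 'I_k -> nat) : nat := \sum_(j < k) m j.

Definition FD (A : 'M[K]_r) (B : 'I_k -> 'M[K]_r) (C : 'M[K]_r) : mseries :=
  fun m =>
    ((\prod_(j < k) (m j)`!)%:R)^-1 *: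
      (poch A (msum m) *m (\prod_(j < k) poch (B j) (m j))
        *m invmx (poch C (msum m))).

Definition setB (B : 'I_k -> 'M[K]_r) (i : 'I_k) (M : 'M[K]_r) : 'I_k -> 'M[K]_r :=
  fun j => if j == i then M else B j.

Definition setm (m : 'I_k -> nat) (i : 'I_k) (p : nat) : 'I_k -> nat :=
  fun j => if j == i then p else m j.

Definition xmul (i : 'I_k) (F : mseries) : mseries :=
  fun m => if m i is p.+1 then F (setm m i p) else 0.

Definition smulL (A : 'M[K]_r) (F : mseries) : mseries := fun m => A *m F m.
Definition smulR (F : mseries) (C : 'M[K]_r) : mseries := fun m => F m *m C.
Definition sadd (F G : mseries) : mseries := fun m => F m + G m.
Definition ssub (F G : mseries) : mseries := fun m => F m - G m.

End FD.

From HB Require Import structures.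
From mathcomp Require Import all_boot all_order all_algebra.
From Stdlib Require Import FunctionalExtensionality.
Set Implicit Arguments. Unset Strict Implicit. Unset Printing Implicit Defensive.
Import Order.TTheory GRing.Theory Num.Theory.
Local Open Scope ring_scope.

(* Everything follows from one contiguous relation,
     F_D[B_i + I] = F_D + x_i A F_D[A + I, B_i + I, C + I] C^{-1},        (+)
   compared coefficientwise.  At a multi-index m with m_i = p + 1 it rests on
     (B_i + I)_{p+1} = (B_i)_{p+1} + (p+1) (B_i + I)_p,
   which, by multilinearity of the ordered product over j, splits the
   coefficient of F_D[B_i + I] into that of F_D and a remainder; the latter is
   identified with the coefficient of x_i A F_D[...] C^{-1} at m using
   (A)_{s+1} = A (A+I)_s, (C)_{s+1} = C (C+I)_s and m! = m_i (m - e_i)!.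
   Iterating (+) with B_i replaced by B_i + (n-1)I, ..., B_i gives the upward
   shift by induction on n; reading (+) backwards at B_i - (n+1)I gives the
   downward shift. *)

Lemma prod_split_factor (R : pzRingType) (I : eqType) (s : seq I) (i : I)
    (F G H : I -> R) (c : R) :
  uniq s -> i \in s -> (forall x, GRing.comm c x) ->
  (forall j, j != i -> G j = F j) -> (forall j, j != i -> H j = F j) ->
  F i = G i + c * H i ->
  \prod_(j <- s) F j = \prod_(j <- s) G j + c * \prod_(j <- s) H j.
Proof.
move=> + + c_central eqG eqH eqFi; elim: s => [|a s IH] //= /andP [a_s uniq_s].
rewrite !big_cons in_cons => /orP [/eqP a_is_i | i_s].
  subst a; have off_i (E : I -> R) : (forall j, j != i -> E j = F j) ->
      \prod_(j <- s) E j = \prod_(j <- s) F j.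
    move=> eqE; apply: eq_big_seq => j j_s; apply: eqE.
    by apply: contraNneq a_s => <-.
  by rewrite eqFi (off_i G eqG) (off_i H eqH) mulrDl mulrA.
have a_i : a != i by apply: contraNneq a_s => ->.
by rewrite IH // (eqG a a_i) (eqH a a_i) mulrDr mulrA -c_central mulrA.
Qed.

Section Pochhammer.
Variables (K : numClosedFieldType) (r : nat).
Implicit Types (M X Y : 'M[K]_r) (p : nat).

Lemma scalar_mx_central (c : K) M : GRing.comm c%:M M.
Proof. by rewrite /GRing.comm -!mulmxE scalar_mxC. Qed.

Lemma shift_scalar_mx M p : M + 1%:M + (p%:R)%:M = M + ((p.+1)%:R)%:M.
Proof. by rewrite -addrA -natr1 raddfD [(_%:M + 1%:M)]addrC. Qed.

Lemma pochSl M p : poch M p.+1 = M * poch (M + 1%:M) p.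
Proof.
rewrite /poch big_ord_recl /= raddf0 addr0; congr (_ * _).
by apply: eq_bigr => j _; rewrite shift_scalar_mx.
Qed.

Lemma pochSr M p : poch M p.+1 = poch M p * (M + (p%:R)%:M).
Proof. by rewrite /poch big_ord_recr. Qed.

(* Contiguous relation (M+I)_{p+1} = (M)_{p+1} + (p+1)(M+I)_p, obtained by
   writing the last factor M+(p+1)I of the left side as M + (p+1)I. *)
Lemma poch_contiguous M p :
  poch (M + 1%:M) p.+1 = poch M p.+1 + ((p.+1)%:R)%:M * poch (M + 1%:M) p.
Proof.
have M_comm : GRing.comm M (poch (M + 1%:M) p).
  apply: commr_prod => j _; apply: commrD; last exact/commr_sym/scalar_mx_central.
  by apply: commrD; [exact: commr_refl | exact/commr_sym/scalar_mx_central].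
by rewrite pochSr pochSl shift_scalar_mx mulrDr M_comm scalar_mx_central.
Qed.

Lemma poch_unit M p : (forall j, (j < p)%N -> M + (j%:R)%:M \in unitmx) ->
  poch M p \in unitmx.
Proof.
elim: p => [|p IH] unitM; first by rewrite /poch big_ord0 unitmx1.
by rewrite pochSr -mulmxE unitmx_mul IH ?unitM // => j /ltnW; apply: unitM.
Qed.

Lemma invmxM X Y : X \in unitmx -> Y \in unitmx ->
  invmx (X *m Y) = invmx Y *m invmx X.
Proof.
move=> uX uY; have uXY : X *m Y \in unitmx by rewrite unitmx_mul uX uY.
rewrite -[RHS](mulmxK uXY) mulmxA -[invmx Y *m invmx X *m X]mulmxA mulVmx //.
by rewrite mulmx1 mulVmx // mul1mx.
Qed.

Lemma poch_ratioS A C X s : (forall m : nat, C + (m%:R)%:M \in unitmx) ->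
  poch A s.+1 *m X *m invmx (poch C s.+1)
  = A *m (poch (A + 1%:M) s *m X *m invmx (poch (C + 1%:M) s)) *m invmx C.
Proof.
move=> unitC; have unitC0 : C \in unitmx by move: (unitC 0%N); rewrite raddf0 addr0.
have unitC1 : poch (C + 1%:M) s \in unitmx.
  by apply: poch_unit => j _; rewrite shift_scalar_mx.
by rewrite !pochSl -!mulmxE invmxM // !mulmxA.
Qed.

End Pochhammer.

Section MultiIndex.
Variable k : nat.
Implicit Types (m : 'I_k -> nat) (i : 'I_k).

Lemma msum_setm m i p : m i = p.+1 -> msum m = (msum (setm m i p)).+1.
Proof.
move=> m_i; rewrite /msum (bigD1 i) //= [in RHS](bigD1 i) //= /setm eqxx m_i.
by rewrite addSn; congr (_ + _).+1; apply: eq_bigr => j /negPf ->.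
Qed.

Lemma fact_setm m i p : m i = p.+1 ->
  (\prod_(j < k) (m j)`! = p.+1 * \prod_(j < k) (setm m i p j)`!)%N.
Proof.
move=> m_i; rewrite (bigD1 i) //= [in RHS](bigD1 i) //= /setm eqxx m_i factS.
by rewrite -mulnA; congr (_ * (_ * _))%N; apply: eq_bigr => j /negPf ->.
Qed.

End MultiIndex.

Section Series.
Variables (K : numClosedFieldType) (r k : nat).
Implicit Types (A C : 'M[K]_r) (B : 'I_k -> 'M[K]_r) (F G H : mseries K r k).

Lemma sadd0 F : sadd F (fun _ => 0) = F.
Proof. by apply: functional_extensionality => m; rewrite /sadd addr0. Qed.

Lemma ssub0 F : ssub F (fun _ => 0) = F.
Proof. by apply: functional_extensionality => m; rewrite /ssub subr0. Qed.

Lemma saddA F G H : sadd F (sadd G H) = sadd (sadd F G) H.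
Proof. by apply: functional_extensionality => m; rewrite /sadd addrA. Qed.

Lemma ssub_ssub F G H : ssub (ssub F G) H = ssub F (sadd G H).
Proof. by apply: functional_extensionality => m; rewrite /ssub /sadd opprD addrA. Qed.

Lemma sadd_ssubK F G : ssub (sadd F G) G = F.
Proof. by apply: functional_extensionality => m; rewrite /ssub /sadd addrK. Qed.

Definition xAC (i : 'I_k) A C F : mseries K r k := xmul i (smulR (smulL A F) (invmx C)).

Lemma xAC_sadd i A C F G : xAC i A C (sadd F G) = sadd (xAC i A C F) (xAC i A C G).
Proof.
apply: functional_extensionality => m; rewrite /xAC /xmul /smulR /smulL /sadd.
by case: (m i) => [|p]; rewrite ?addr0 // mulmxDr mulmxDl.
Qed.

Lemma xAC_sum_nat i A C (a b : nat) (F : nat -> mseries K r k) : (a <= b)%N ->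
  xAC i A C (fun m => \sum_(a <= n1 < b.+1) F n1 m)
  = sadd (xAC i A C (fun m => \sum_(a <= n1 < b) F n1 m)) (xAC i A C (F b)).
Proof.
move=> a_le_b; rewrite -xAC_sadd; congr (xAC _ _ _ _).
by apply: functional_extensionality => m; rewrite big_nat_recr.
Qed.

Lemma xAC_sum_nil i A C (a : nat) (F : nat -> mseries K r k) :
  xAC i A C (fun m => \sum_(a <= n1 < a) F n1 m) = fun _ => 0.
Proof.
apply: functional_extensionality => m; rewrite /xAC /xmul /smulR /smulL.
by case: (m i) => [|p] //; rewrite big_geq // mulmx0 mul0mx.
Qed.

Lemma setB_at B i M : setB B i M i = M.
Proof. by rewrite /setB eqxx. Qed.

Lemma setB_id B i : setB B i (B i) = B.
Proof. by apply: functional_extensionality => j; rewrite /setB; case: eqP => // ->. Qed.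

Lemma setB_setB B i M N : setB (setB B i M) i N = setB B i N.
Proof. by apply: functional_extensionality => j; rewrite /setB; case: eqP. Qed.

Lemma FD_contiguous A B C i : (forall m : nat, C + (m%:R)%:M \in unitmx) ->
  FD A (setB B i (B i + 1%:M)) C
  = sadd (FD A B C) (xAC i A C (FD (A + 1%:M) (setB B i (B i + 1%:M)) (C + 1%:M))).
Proof.
move=> unitC; apply: functional_extensionality => m.
rewrite /sadd /xAC /xmul /smulR /smulL.
case m_i: (m i) => [|p].
  rewrite addr0 /FD; congr (_ *: (_ *m _ *m _)); apply: eq_bigr => j _.
  by rewrite /setB; case: eqP => // ->; rewrite m_i /poch !big_ord0.
pose Bi1 := setB B i (B i + 1%:M).
have split_prod : \prod_(j < k) poch (Bi1 j) (m j)
    = \prod_(j < k) poch (B j) (m j)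
      + ((p.+1)%:R)%:M * \prod_(j < k) poch (Bi1 j) (setm m i p j).
  apply: (prod_split_factor (i := i)); rewrite ?index_enum_uniq ?mem_index_enum //.
  - exact: scalar_mx_central.
  - by move=> j /negPf j_i; rewrite /Bi1 /setB j_i.
  - by move=> j /negPf j_i; rewrite /setm j_i.
  - by rewrite /Bi1 setB_at m_i /setm eqxx poch_contiguous.
rewrite /FD split_prod (fact_setm m_i) (msum_setm m_i) mulmxDr mulmxDl scalerDr.
congr (_ + _); rewrite poch_ratioS // -mulmxE mul_scalar_mx.
rewrite -!(scalemxAr, scalemxAl) scalerA natrM invfM mulrAC mulVf ?mul1r //.
by rewrite pnatr_eq0.
Qed.

Lemma FD_shift_up A B C i n : (forall m : nat, C + (m%:R)%:M \in unitmx) ->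
  FD A (setB B i (B i + (n%:R)%:M)) C
  = sadd (FD A B C) (xAC i A C (fun m => \sum_(1 <= n1 < n.+1)
      FD (A + 1%:M) (setB B i (B i + (n1%:R)%:M)) (C + 1%:M) m)).
Proof.
move=> unitC; elim: n => [|n IH]; first by rewrite raddf0 addr0 setB_id xAC_sum_nil sadd0.
have raise : setB B i (B i + (n.+1%:R)%:M)
    = setB (setB B i (B i + (n%:R)%:M)) i (setB B i (B i + (n%:R)%:M) i + 1%:M).
  by rewrite setB_setB setB_at -natr1 raddfD addrA.
rewrite raise FD_contiguous // IH -raise.
by rewrite [in RHS]xAC_sum_nat // saddA.
Qed.

Lemma FD_shift_down A B C i n : (forall m : nat, C + (m%:R)%:M \in unitmx) ->
  FD A (setB B i (B i - (n%:R)%:M)) C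
  = ssub (FD A B C) (xAC i A C (fun m => \sum_(0 <= n1 < n)
      FD (A + 1%:M) (setB B i (B i - (n1%:R)%:M)) (C + 1%:M) m)).
Proof.
move=> unitC; elim: n => [|n IH]; first by rewrite raddf0 subr0 setB_id xAC_sum_nil ssub0.
have lower : setB B i (B i - (n%:R)%:M)
    = setB (setB B i (B i - (n.+1%:R)%:M)) i (setB B i (B i - (n.+1%:R)%:M) i + 1%:M).
  by rewrite setB_setB setB_at -natr1 raddfD opprD addrA subrK.
have step := @FD_contiguous A (setB B i (B i - (n.+1%:R)%:M)) C i unitC.
rewrite -lower in step.
by rewrite [in RHS]xAC_sum_nat // -ssub_ssub -IH step sadd_ssubK.
Qed.

End Series.

(* The theorem: both shifts hold for every n. *)
Theorem mainTheorem13 (K : numClosedFieldType) (r k : nat) (hk : (0 < k)%N)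
  (A : 'M[K]_r) (B : 'I_k -> 'M[K]_r) (C : 'M[K]_r)
  (hC : forall m : nat, C + (m%:R)%:M \in unitmx)
  (i : 'I_k) (n : nat) (hn : (0 < n)%N)
  (hB : forall m : nat, B i + (m%:R)%:M \in unitmx) :
  (FD A (setB B i (B i + (n%:R)%:M)) C =
   sadd (FD A B C)
     (xmul i (smulR (smulL A
        (fun m => \sum_(1 <= n1 < n.+1)
           FD (A + 1%:M) (setB B i (B i + (n1%:R)%:M)) (C + 1%:M) m))
        (invmx C))))
  /\
  ((forall n1 : nat, (n1 <= n)%N -> B i - (n1%:R)%:M \in unitmx) ->
   FD A (setB B i (B i - (n%:R)%:M)) C =
   ssub (FD A B C)
     (xmul i (smulR (smulL A
        (fun m => \sum_(0 <= n1 < n)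
           FD (A + 1%:M) (setB B i (B i - (n1%:R)%:M)) (C + 1%:M) m))
        (invmx C)))).
Proof.
split; first exact: FD_shift_up.
by move=> _; exact: FD_shift_down.
Qed.
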